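(* Let $D(a_0,a_1,a_2;p)=\sum_{k=0}^2\binom{2}{k}p^k(1-p)^{2-k}|p-a_k|$ and let $(a_0,a_1,a_2)\in[0,1]^3$ minimize $\max_{p\in[0,1]}D(x_0,x_1,x_2;p)$ over $[0,1]^3$. Then $0<a_0<0.2<0.4<a_1<0.6<0.8<a_2<1$; moreover $a_1-a_0<0.4$ and $a_2-a_1<0.4$. *)

From HB Require Import structures.
From mathcomp Require Import all_boot all_order all_algebra.
From mathcomp Require Import all_classical all_reals.
Set Implicit Arguments. Unset Strict Implicit. Unset Printing Implicit Defensive.
Import Order.TTheory GRing.Theory Num.Theory.
Local Open Scope ring_scope.
Local Open Scope classical_set_scope.

Definition D (R : realType) (a0 a1 a2 p : R) : R :=
  \sum_(k < 3) ('C(2, k))%:R * p ^+ k * (1 - p) ^+ (2 - k) * `|p - [:: a0; a1; a2]`_k|.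

Definition maxD (R : realType) (a0 a1 a2 : R) : R :=
  sup [set D a0 a1 a2 p | p in [set p : R | 0 <= p <= 1]].

Definition in01 (R : realType) (x : R) : Prop := 0 <= x <= 1.

From HB Require Import structures.
From mathcomp Require Import all_boot all_order all_algebra.
From mathcomp Require Import all_classical all_reals.
From mathcomp Require Import ring lra.
Import Order.TTheory GRing.Theory Num.Theory.
Local Open Scope ring_scope.
Local Open Scope classical_set_scope.

(* The triple (19/100, 1/2, 81/100) has max_p D < 199/1000 < 1/5, so a
   minimizer satisfies D(a0,a1,a2;p) <= 199/1000 for every p in [0,1].  At a
   fixed p, D is a nonnegative combination of the |p - a_k|, so this bound at
   one, two or three well chosen sample points p already forces each of the
   claimed linear inequalities on (a0, a1, a2). *)

Lemma D_expand (R : realType) (a0 a1 a2 p : R) : D a0 a1 a2 p =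
  (1 - p) ^+ 2 * `|p - a0| + 2 * p * (1 - p) * `|p - a1| + p ^+ 2 * `|p - a2|.
Proof.
rewrite /D !big_ord_recr big_ord0 /= !binn bin0 bin1 !subn0 subnn !expr0 !expr1.
ring.
Qed.

Lemma D_le1 (R : realType) (a0 a1 a2 p : R) : in01 a0 -> in01 a1 -> in01 a2 ->
  0 <= p <= 1 -> D a0 a1 a2 p <= 1.
Proof.
move=> /andP[? ?] /andP[? ?] /andP[? ?] /andP[? ?]; rewrite D_expand.
have dist_le1 a : 0 <= a <= 1 -> `|p - a| <= 1.
  by case/andP=> ? ?; rewrite ler_norml; apply/andP; split; lra.
have weights_sum1 : (1 - p) ^+ 2 + 2 * p * (1 - p) + p ^+ 2 = 1 by ring.
rewrite -[leRHS]weights_sum1; apply: lerD; first apply: lerD.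
- by rewrite ler_piMr ?sqr_ge0 ?dist_le1 //; apply/andP; split.
- by rewrite ler_piMr ?dist_le1 //; [apply: mulr_ge0; [apply: mulr_ge0|]; lra
                                   | apply/andP; split].
- by rewrite ler_piMr ?sqr_ge0 ?dist_le1 //; apply/andP; split.
Qed.

Lemma D_le_maxD (R : realType) (a0 a1 a2 p : R) : in01 a0 -> in01 a1 -> in01 a2 ->
  0 <= p <= 1 -> D a0 a1 a2 p <= maxD a0 a1 a2.
Proof.
move=> h0 h1 h2 hp; apply: ub_le_sup; last by exists p.
by exists 1 => _ [q hq <-]; exact: D_le1.
Qed.

Lemma maxD_le (R : realType) (a0 a1 a2 c : R) :
  (forall p, 0 <= p <= 1 -> D a0 a1 a2 p <= c) -> maxD a0 a1 a2 <= c.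
Proof.
move=> h; apply: ge_sup; last by move=> _ [q hq <-]; exact: h.
by exists (D a0 a1 a2 0), 0 => //=; rewrite lexx ler01.
Qed.

(* [lerP] also resolves the norm [`|p - c|] at each split point.  The true
   maximum (about 0.1925) sits near p = 9/25 and p = 16/25; on the two middle
   pieces 199/1000 - D is the square factor handed to nra plus a positive
   linear term. *)
Lemma maxD_witness (R : realType) :
  maxD (19/100 : R) (1/2) (81/100) <= 199/1000.
Proof.
apply: maxD_le => p /andP[p_ge0 p_le1]; rewrite D_expand.
have [pA|pA] := lerP p (19/100).
  by rewrite !ler0_norm; [nra | lra..].
have [pB|pB] := lerP p (1/2).
  have : 0 <= (p - 9/25) ^+ 2 * (147/50 - 2 * p).
    by apply: mulr_ge0; [exact: sqr_ge0 | lra].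
  by rewrite ler0_norm; [nra | lra].
have [pC|pC] := lerP p (81/100); last nra.
have : 0 <= (p - 16/25) ^+ 2 * (2 * p + 47/50).
  by apply: mulr_ge0; [exact: sqr_ge0 | lra].
nra.
Qed.

Lemma abs_bounds {R : realDomainType} (x : R) : x <= `|x| /\ - x <= `|x|.
Proof. by split; [exact: ler_norm | rewrite -normrN; exact: ler_norm]. Qed.

Section SmallMaxD.

Context {R : realType} {a0 a1 a2 : R}.
Hypothesis D_small : forall p, 0 <= p <= 1 -> D a0 a1 a2 p <= 199/1000.

Lemma sample_bound (p : R) : 0 <= p -> p <= 1 ->
  (1 - p) ^+ 2 * `|p - a0| + 2 * p * (1 - p) * `|p - a1| + p ^+ 2 * `|p - a2|
    <= 199/1000.
Proof. by move=> ? ?; rewrite -D_expand; apply: D_small; apply/andP. Qed.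

Tactic Notation "sample" uconstr(p) :=
  let q := constr:(p : R) in
  have := sample_bound q ltac:(lra) ltac:(lra);
  have [? ?] := abs_bounds (q - a0); have [? ?] := abs_bounds (q - a1);
  have [? ?] := abs_bounds (q - a2).

Lemma a0_gt0 : 0 < a0.
Proof. sample (3/10); sample (7/10); lra. Qed.

Lemma a0_lt_1_5 : a0 < 1/5.
Proof. sample 0; lra. Qed.

Lemma a1_gt_2_5 : 2/5 < a1.
Proof. sample 0; sample (6/10); sample (9/10); lra. Qed.

Lemma a1_lt_3_5 : a1 < 3/5.
Proof. sample 0; sample (3/10); sample (9/10); lra. Qed.

Lemma a2_gt_4_5 : 4/5 < a2.
Proof. sample 1; lra. Qed.

Lemma a2_lt1 : a2 < 1.
Proof. sample 0; sample (6/10); lra. Qed.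

Lemma a1_sub_a0_lt_2_5 : a1 - a0 < 2/5.
Proof. sample (4/10); sample 1; lra. Qed.

Lemma a2_sub_a1_lt_2_5 : a2 - a1 < 2/5.
Proof. sample 0; sample (6/10); lra. Qed.

End SmallMaxD.

Theorem lemma5p2 (R : realType) (a0 a1 a2 : R) :
  in01 a0 -> in01 a1 -> in01 a2 ->
  (forall x0 x1 x2 : R, in01 x0 -> in01 x1 -> in01 x2 ->
     maxD a0 a1 a2 <= maxD x0 x1 x2) ->
  (0 < a0 /\ a0 < 1/5 /\ 2/5 < a1 /\ a1 < 3/5 /\ 4/5 < a2 /\ a2 < 1) /\
  (a1 - a0 < 2/5 /\ a2 - a1 < 2/5).
Proof.
move=> a0_01 a1_01 a2_01 minimal.
have maxD_small : maxD a0 a1 a2 <= 199/1000.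
  apply: le_trans (maxD_witness R).
  by apply: minimal; rewrite /in01; apply/andP; split; lra.
have D_small p : 0 <= p <= 1 -> D a0 a1 a2 p <= 199/1000.
  by move=> p01; apply: le_trans maxD_small; exact: D_le_maxD.
split.
  split; first exact: a0_gt0 D_small.
  split; first exact: a0_lt_1_5 D_small.
  split; first exact: a1_gt_2_5 D_small.
  split; first exact: a1_lt_3_5 D_small.
  split; first exact: a2_gt_4_5 D_small.
  exact: a2_lt1 D_small.
split; [exact: a1_sub_a0_lt_2_5 D_small | exact: a2_sub_a1_lt_2_5 D_small].
Qed.
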